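(* Let $q,d\geq 2$ be coprime integers. Suppose that for every $\mathbf{s}\in\mathbb{Z}^5$ the density $\delta(q,d;\mathbf{s})$ exists. Then for every $\theta_w,x\in\mathbb{Z}/d\mathbb{Z}$ and every unit $\theta_u$ of $\mathbb{Z}/d\mathbb{Z}$, $$\delta(q,d;\theta_u,\theta_w,0,0,x)=\frac{1}{d}.$$ In particular, the map $n\mapsto u_q(n)$ is uniformly distributed modulo $d$ (every residue class modulo $d$ is attained by $u_q(n)$ on a set of $n$ of natural density $1/d$).
   Context: For an integer $q\geq 2$ and $n\in\mathbb{N}$: $v_q(0)=0$ and, for $n>0$, $v_q(n)=\max\{k: q^k\mid n\}$; $w_q(n)=\sum_{i=0}^n v_q(i)$; $u_q(n)=\sum_{i=0}^n w_q(i)$. For $\mathbf{s}=(\theta_u,\theta_w,\theta_2,\theta_1,\theta_0)$ with entries in $\mathbb{Z}$ or $\mathbb{Z}/d\mathbb{Z}$, $\gamma(A,q,d;\mathbf{s})$ is the number of $n\in\mathbb{N}$, $n<A$, with $\theta_u u_q(n)+\theta_w w_q(n)+\theta_2\frac{n(n+1)}{2}+\theta_1 n+\theta_0\equiv 0\pmod d$, and $\delta(q,d;\mathbf{s})=\lim_{N\to\infty}\gamma(N,q,d;\mathbf{s})/N$ (when the limit exists). *)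

From HB Require Import structures.
From mathcomp Require Import all_boot all_order all_algebra.
From mathcomp Require Import all_classical all_reals all_analysis.
Set Implicit Arguments. Unset Strict Implicit. Unset Printing Implicit Defensive.
Import Order.TTheory GRing.Theory Num.Theory.

(* v_q(0) = 0; for n > 0, v_q(n) = max{k : q^k | n}.  For q >= 2 and n > 0
   every such k satisfies k <= n, so the max over k < n.+1 is the max over all k. *)
Definition vq (q n : nat) : nat :=
  if n == 0 then 0 else \max_(k < n.+1 | q ^ k %| n) (k : nat).

Definition wq (q n : nat) : nat := \sum_(i < n.+1) vq q i.

Definition uq (q n : nat) : nat := \sum_(i < n.+1) wq q i.

Definition expr_s (q : nat) (tu tw t2 t1 t0 : int) (n : nat) : int :=
  (tu * (uq q n)%:Z + tw * (wq q n)%:Z + t2 * ((n * n.+1) %/ 2)%:Z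
   + t1 * n%:Z + t0)%R.

Definition gamma (A q d : nat) (tu tw t2 t1 t0 : int) : nat :=
  #|[set n : 'I_A | (expr_s q tu tw t2 t1 t0 n == 0 %[mod d%:Z])%Z]|.

(* The sequence N |-> gamma(N,q,d;s)/N, whose limit is delta(q,d;s). *)
Definition gamma_ratio (R : realType) (q d : nat) (tu tw t2 t1 t0 : int)
  : nat -> R :=
  fun N => ((gamma N q d tu tw t2 t1 t0)%:R / N%:R)%R.

(* Choose K with q ^ K = 1, w_q(q ^ K) = 0 and sum_(i < q ^ K) w_q(i) = 0 modulo d.
   For n = q ^ K m + B with B < q ^ K, the block formulas for w_q and u_q give
   w_q(n) = w_q(m) + w_q(B) and u_q(n) = u_q(m) + B w_q(m) + u_q(B) modulo d, so
   the density D(w, y) of (theta_u, w, 0, 0, y), a function on (Z/dZ)^2, is the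
   mean of D(w + theta_u B, y + theta_u u_q(B) + w w_q(B)) over B < q ^ K.
   Hence the maximum of D propagates: B = 1 moves w by the unit theta_u, so D is
   maximal on a whole row, and B = q moves y by theta_u + w, which reaches every
   row.  D is therefore constant, and since sum_y D(w, y) = 1 it equals 1/d. *)

From HB Require Import structures.
From mathcomp Require Import all_boot all_order all_algebra.
From mathcomp Require Import all_classical all_reals all_analysis.
From mathcomp Require Import cyclic ring zify.
Import Order.TTheory GRing.Theory Num.Theory.
Import numFieldNormedType.Exports.

Set Implicit Arguments.
Unset Strict Implicit.
Unset Printing Implicit Defensive.

Section Digits.
Variable q : nat.
Hypothesis q_gt1 : 1 < q.

Lemma vq_dvdE n k : 0 < n -> (q ^ k %| n) = (k <= vq q n).
Proof.
move=> n_gt0; rewrite /vq gtn_eqF //.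
set P := [pred j : 'I_n.+1 | q ^ j %| n].
have lt_n j : q ^ j %| n -> j < n.+1.
  by move=> /(dvdn_leq n_gt0); have := ltn_expl j q_gt1; lia.
have P_ne0 : 0 < #|P| by apply/card_gt0P; exists ord0; rewrite inE dvd1n.
have [i0 P_i0 max_i0] := eq_bigmax_cond val P_ne0.
apply/idP/idP => [dvd_k | le_k].
  exact: (leq_bigmax_cond (Ordinal (lt_n _ dvd_k))).
by apply: dvdn_trans P_i0; rewrite dvdn_exp2l // -max_i0.
Qed.

Lemma vq_uniq n v : 0 < n -> (forall k, (q ^ k %| n) = (k <= v)) -> vq q n = v.
Proof.
move=> n_gt0 dvdE; apply/eqP.
by rewrite eqn_leq -dvdE vq_dvdE // leqnn -vq_dvdE // dvdE leqnn.
Qed.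

Lemma vq_small i : 0 < i < q -> vq q i = 0.
Proof.
move=> /andP[i_gt0 lt_iq]; apply: vq_uniq => // -[|k]; first by rewrite dvd1n.
apply/negbTE/negP => /(dvdn_leq i_gt0).
by have := leq_pexp2l (ltnW q_gt1) (ltn0Sn k); rewrite expn1; lia.
Qed.

Lemma vq1 : vq q 1 = 0.
Proof. by apply: vq_small; rewrite /= q_gt1. Qed.

Lemma vq_powM K j : 0 < j -> vq q (q ^ K * j) = K + vq q j.
Proof.
move=> j_gt0; have qK_gt0 : 0 < q ^ K by rewrite expn_gt0; lia.
apply: vq_uniq => [|k]; first by rewrite muln_gt0 qK_gt0.
have [le_kK | lt_Kk] := leqP k K.
  by rewrite dvdn_mulr ?dvdn_exp2l // (leq_trans le_kK (leq_addr _ _)).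
rewrite -(subnKC (ltnW lt_Kk)) expnD dvdn_pmul2l // vq_dvdE //; lia.
Qed.

Lemma vq_powMD K j i : 0 < i < q ^ K -> vq q (q ^ K * j + i) = vq q i.
Proof.
move=> /andP[i_gt0 lt_iqK]; apply: vq_uniq => [|k]; first lia.
have dvd_qK : q ^ K %| q ^ K * j by apply: dvdn_mulr.
have [le_kK | lt_Kk] := leqP k K.
  by rewrite (dvdn_addr _ (dvdn_trans (dvdn_exp2l q le_kK) dvd_qK)) vq_dvdE.
have qK_ndvd : ~~ (q ^ K %| i) by apply/negP => /(dvdn_leq i_gt0); lia.
have dvd_Kk : q ^ K %| q ^ k by rewrite dvdn_exp2l // ltnW.
rewrite -vq_dvdE //; apply/idP/idP => /(dvdn_trans dvd_Kk).
  by rewrite (dvdn_addr _ dvd_qK) (negbTE qK_ndvd).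
by rewrite (negbTE qK_ndvd).
Qed.

Lemma wqS n : wq q n.+1 = wq q n + vq q n.+1.
Proof. by rewrite /wq big_ord_recr. Qed.

Lemma wq0 : wq q 0 = 0.
Proof. by rewrite /wq big_ord1. Qed.

Definition sumwq n := \sum_(i < n) wq q i.

Lemma sumwqS n : sumwq n.+1 = sumwq n + wq q n.
Proof. by rewrite /sumwq big_ord_recr. Qed.

Lemma sumwq0 : sumwq 0 = 0.
Proof. by rewrite /sumwq big_ord0. Qed.

Lemma uqE n : uq q n = sumwq n.+1.
Proof. by []. Qed.

Lemma wq_block K m B : B < q ^ K ->
  wq q (q ^ K * m + B) = m * wq q (q ^ K) + wq q m + wq q B.
Proof.
have qK_gt0 : 0 < q ^ K by rewrite expn_gt0; lia.
have wq_qK : wq q (q ^ K) = wq q (q ^ K).-1 + K.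
  by rewrite -{1}(prednK qK_gt0) wqS prednK // -[q ^ K]muln1 vq_powM // vq1 addn0.
elim: m B => [|m IHm] B; first by rewrite muln0 wq0.
elim: B => [|B IHB] lt_BqK.
  have last_m : (q ^ K * m + (q ^ K).-1).+1 = q ^ K * m.+1 by lia.
  rewrite addn0 -last_m wqS IHm ?ltn_predL // last_m vq_powM // (wqS m) wq0 wq_qK; ring.
rewrite addnS wqS -addnS IHB 1?ltnW // vq_powMD ?lt_BqK // (wqS B); ring.
Qed.

Lemma sumwq_block K m B : B <= q ^ K ->
  sumwq (q ^ K * m + B) = q ^ K * wq q (q ^ K) * 'C(m, 2) + q ^ K * sumwq m
    + m * sumwq (q ^ K) + B * (m * wq q (q ^ K) + wq q m) + sumwq B.
Proof.
have qK_gt0 : 0 < q ^ K by rewrite expn_gt0; lia.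
elim: m B => [|m IHm] B; first by rewrite muln0 wq0 sumwq0 bin0n => _ /=; ring.
elim: B => [|B IHB] le_BqK.
  by rewrite addn0 mulnSr IHm // binS bin1 sumwqS sumwq0; ring.
by rewrite addnS sumwqS IHB 1?ltnW // wq_block // (sumwqS B); ring.
Qed.

Lemma wq_small i : i < q -> wq q i = 0.
Proof.
elim: i => [|i IHi] lt_iq; first exact: wq0.
by rewrite wqS IHi 1?ltnW // vq_small.
Qed.

Lemma wq_q : wq q q = 1.
Proof.
have vq_q : vq q q = 1 by rewrite -[X in vq _ X]muln1 -{2}[q]expn1 vq_powM // vq1.
have q_gt0 := ltnW q_gt1.
by rewrite -[X in wq _ X](prednK q_gt0) wqS (prednK q_gt0) vq_q wq_small // ltn_predL.
Qed.

Lemma sumwq_small i : i <= q -> sumwq i = 0.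
Proof.
elim: i => [|i IHi] le_iq; first exact: sumwq0.
by rewrite sumwqS IHi 1?ltnW // wq_small.
Qed.

Lemma uq_q : uq q q = 1.
Proof. by rewrite uqE sumwqS sumwq_small // wq_q. Qed.

Lemma uq1 : uq q 1 = 0.
Proof. by rewrite uqE sumwq_small. Qed.

Lemma wq_powM K m : wq q (q ^ K * m) = m * wq q (q ^ K) + wq q m.
Proof. by rewrite -[q ^ K * m]addn0 wq_block ?wq0 ?addn0 // expn_gt0 ltnW. Qed.

Lemma sumwq_powM K m : sumwq (q ^ K * m) =
  q ^ K * wq q (q ^ K) * 'C(m, 2) + q ^ K * sumwq m + m * sumwq (q ^ K).
Proof. by rewrite -[q ^ K * m]addn0 sumwq_block // sumwq0 mul0n !addn0. Qed.

End Digits.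

Local Open Scope ring_scope.

Lemma intr_expr_s (R : pzRingType) q tu tw t2 t1 t0 n :
  (expr_s q tu tw t2 t1 t0 n)%:~R = tu%:~R * (uq q n)%:R + tw%:~R * (wq q n)%:R
    + t2%:~R * ((n * n.+1) %/ 2)%:R + t1%:~R * n%:R + t0%:~R :> R.
Proof. by rewrite /expr_s !intrD !intrM -!pmulrn. Qed.

Lemma gammaE A q d tu tw t2 t1 t0 : gamma A q d tu tw t2 t1 t0 =
  (\sum_(n < A) ((expr_s q tu tw t2 t1 t0 n == 0 %[mod d])%Z : nat))%N.
Proof. by rewrite /gamma -sum1dep_card big_mkcond; apply: eq_bigr => n _; case: ifP. Qed.

Lemma sum_nat_blocks (F : nat -> nat) N L :
  (\sum_(n < N * L) F n = \sum_(B < N) \sum_(m < L) F (N * m + B))%N.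
Proof.
elim: L => [|L IHL]; first by rewrite muln0 big_ord0 big1 // => B _; rewrite big_ord0.
rewrite mulnS addnC big_split_ord IHL /= -big_split /=.
by apply: eq_bigr => B _; rewrite big_ord_recr /= addnC.
Qed.

Section ResidueClasses.
Variable d : nat.
Hypothesis d_gt1 : (1 < d)%N.

Lemma natr_Zp_eq0 n : ((n%:R : 'Z_d) == 0) = (d %| n)%N.
Proof. by rewrite -val_eqE /= val_Zp_nat. Qed.

Lemma intr_Zp_eq0 (x : int) : ((x%:~R : 'Z_d) == 0) = (x == 0 %[mod d])%Z.
Proof.
rewrite eqz_mod_dvd subr0; case: x => n; first by rewrite -pmulrn natr_Zp_eq0.
by rewrite NegzE mulrNz oppr_eq0 -pmulrn natr_Zp_eq0.
Qed.

Lemma intr_Zp_unit (x : int) : coprimez x d -> (x%:~R : 'Z_d) \is a GRing.unit.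
Proof.
rewrite coprimezE coprime_sym; case: x => n co; first by rewrite -pmulrn unitZpE.
by rewrite NegzE mulrNz unitrN -pmulrn unitZpE.
Qed.

Lemma gamma_congr A q tu tw t2 t1 t0 tu' tw' t2' t1' t0' :
  tu%:~R = tu'%:~R :> 'Z_d -> tw%:~R = tw'%:~R :> 'Z_d -> t2%:~R = t2'%:~R :> 'Z_d ->
  t1%:~R = t1'%:~R :> 'Z_d -> t0%:~R = t0'%:~R :> 'Z_d ->
  gamma A q d tu tw t2 t1 t0 = gamma A q d tu' tw' t2' t1' t0'.
Proof.
move=> eq_u eq_w eq_2 eq_1 eq_0; apply: eq_card => n.
by rewrite !inE -!intr_Zp_eq0 // !intr_expr_s eq_u eq_w eq_2 eq_1 eq_0.
Qed.

Lemma gamma_sum A q tu tw t2 t1 :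
  (\sum_(y : 'Z_d) gamma A q d tu tw t2 t1 (y : nat)%:Z)%N = A.
Proof.
under eq_bigr do rewrite gammaE; rewrite exchange_big /=.
rewrite -[RHS]card_ord -sum1_card; apply: eq_bigr => n _.
set c : 'Z_d := (expr_s q tu tw t2 t1 0 n)%:~R.
have cast_expr (y : 'Z_d) : (expr_s q tu tw t2 t1 (y : nat)%:Z n)%:~R = y + c.
  by rewrite /c !intr_expr_s -pmulrn natr_Zp; ring.
under eq_bigr do rewrite -intr_Zp_eq0 // cast_expr addr_eq0.
by rewrite (bigD1 (- c)) //= eqxx big1 // => y /negbTE ->.
Qed.

Variable q : nat.
Hypothesis q_gt1 : (1 < q)%N.

Lemma wq_expM_Zp K j : (q%:R : 'Z_d) ^+ K = 1 ->
  (wq q (q ^ (K * j)))%:R = j%:R * (wq q (q ^ K))%:R :> 'Z_d.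
Proof.
move=> qK1; elim: j => [|j IHj]; first by rewrite muln0 expn0 wq_small //; ring.
rewrite mulnS expnD wq_powM // natrD natrM IHj natrX exprM qK1 expr1n; ring.
Qed.

Lemma sumwq_expM_Zp K j : (q%:R : 'Z_d) ^+ K = 1 -> (wq q (q ^ K))%:R = 0 :> 'Z_d ->
  (sumwq q (q ^ (K * j)))%:R = j%:R * (sumwq q (q ^ K))%:R :> 'Z_d.
Proof.
move=> qK1 wqK0; elim: j => [|j IHj]; first by rewrite muln0 expn0 sumwqS sumwq0 wq0; ring.
rewrite mulnS expnD sumwq_powM // !natrD !natrM IHj wqK0 !natrX exprM qK1 expr1n.
ring.
Qed.

(* Euler's theorem gives q ^ totient d = 1; one factor d in the exponent makes
   w_q(q ^ K) vanish (wq_expM_Zp), and a second one does the same for sumwq. *)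
Lemma exists_period : coprime q d -> exists K, [/\ (q < q ^ K)%N,
  (q%:R : 'Z_d) ^+ K = 1, (wq q (q ^ K))%:R = 0 :> 'Z_d
  & (sumwq q (q ^ K))%:R = 0 :> 'Z_d].
Proof.
move=> co_qd; set K := totient d.
have qK1 : (q%:R : 'Z_d) ^+ K = 1.
  by rewrite -natrX -Zp_nat_mod // Euler_exp_totient // Zp_nat_mod.
have qKd1 : (q%:R : 'Z_d) ^+ (K * d) = 1 by rewrite exprM qK1 expr1n.
have wqKd0 : (wq q (q ^ (K * d)))%:R = 0 :> 'Z_d.
  by rewrite wq_expM_Zp // pchar_Zp // mul0r.
exists (K * d * d); split.
- have K_gt0 : (0 < K)%N by rewrite totient_gt0 ltnW.
  rewrite -{1}[q]expn1 ltn_exp2l //; nia.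
- by rewrite exprM qKd1 expr1n.
- by rewrite wq_expM_Zp // pchar_Zp // mul0r.
- by rewrite sumwq_expM_Zp // pchar_Zp // mul0r.
Qed.

Variable K : nat.
Hypotheses (qK1 : (q%:R : 'Z_d) ^+ K = 1) (wqK0 : (wq q (q ^ K))%:R = 0 :> 'Z_d)
  (sumwqK0 : (sumwq q (q ^ K))%:R = 0 :> 'Z_d).

Lemma wq_block_Zp m B : (B < q ^ K)%N ->
  (wq q (q ^ K * m + B))%:R = (wq q m)%:R + (wq q B)%:R :> 'Z_d.
Proof. by move=> lt_BqK; rewrite wq_block // !natrD natrM wqK0 mulr0 add0r. Qed.

Lemma uq_block_Zp m B : (B < q ^ K)%N ->
  (uq q (q ^ K * m + B))%:R = (uq q m)%:R + B%:R * (wq q m)%:R + (uq q B)%:R :> 'Z_d.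
Proof.
move=> lt_BqK; rewrite !uqE -addnS sumwq_block // !natrD !natrM natrX qK1.
by rewrite !sumwqS !natrD !natrM wqK0 sumwqK0; ring.
Qed.

Lemma intr_expr_s_block (tu tw y : int) m B : (B < q ^ K)%N ->
  (expr_s q tu tw 0 0 y (q ^ K * m + B))%:~R =
  (expr_s q tu (tw + tu * B%:Z) 0 0 (y + tu * (uq q B)%:Z + tw * (wq q B)%:Z) m)%:~R
    :> 'Z_d.
Proof.
move=> lt_BqK; rewrite !intr_expr_s uq_block_Zp // wq_block_Zp //.
by rewrite !intrD !intrM -!pmulrn; ring.
Qed.

Lemma gamma_block L (tu tw y : int) : gamma (q ^ K * L) q d tu tw 0 0 y =
  (\sum_(B < q ^ K)
     gamma L q d tu (tw + tu * B%:Z) 0 0 (y + tu * (uq q B)%:Z + tw * (wq q B)%:Z))%N.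
Proof.
rewrite gammaE (sum_nat_blocks (fun n => (expr_s q tu tw 0 0 y n == 0 %[mod d])%Z)).
apply: eq_bigr => B _; rewrite gammaE.
by apply: eq_bigr => m _; rewrite -!intr_Zp_eq0 // intr_expr_s_block.
Qed.

End ResidueClasses.

Lemma mean_eq_max (R : numFieldType) n (f : 'I_n -> R) (M : R) : (0 < n)%N ->
  (forall i, f i <= M) -> n%:R^-1 * \sum_i f i = M -> forall i, f i = M.
Proof.
move=> n_gt0 le_fM mean_M i; apply/eqP; rewrite eq_le le_fM /= -subr_le0.
have sum_gap0 : \sum_j (M - f j) = 0.
  rewrite sumrB sumr_const card_ord -mulr_natl -mean_M mulrA mulfV ?mul1r ?subrr //.
  by rewrite pnatr_eq0 -lt0n.
by rewrite (psumr_eq0P _ sum_gap0) // => j _; rewrite subr_ge0.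
Qed.

Local Open Scope classical_set_scope.

Section Density.
Variables (R : realType) (q d : nat) (tu : int).
Hypotheses (q_gt1 : (1 < q)%N) (d_gt1 : (1 < d)%N) (tu_coprime : coprimez tu d).
Hypothesis gamma_ratio_cvg : forall tw y : int, cvg (gamma_ratio R q d tu tw 0 0 y @ \oo).

Local Notation t := (tu%:~R : 'Z_d).

Definition density (w y : 'Z_d) : R :=
  lim (gamma_ratio R q d tu (w : nat)%:Z 0 0 (y : nat)%:Z @ \oo).

Lemma density_cvg (tw y : int) :
  gamma_ratio R q d tu tw 0 0 y @ \oo --> density tw%:~R y%:~R.
Proof.
have -> : gamma_ratio R q d tu tw 0 0 y =
    gamma_ratio R q d tu ((tw%:~R : 'Z_d) : nat)%:Z 0 0 ((y%:~R : 'Z_d) : nat)%:Z.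
  apply/funext => N; congr (_%:R / _).
  by apply: gamma_congr; rewrite // -pmulrn natr_Zp.
exact: gamma_ratio_cvg.
Qed.

Lemma density_sum w : \sum_(y : 'Z_d) density w y = 1.
Proof.
pose S N := \sum_(y : 'Z_d) gamma_ratio R q d tu (w : nat)%:Z 0 0 (y : nat)%:Z N.
have S_cvg : S @ \oo --> \sum_(y : 'Z_d) density w y.
  by apply: cvg_big => [|y _]; [exact: add_continuous | exact: gamma_ratio_cvg].
have S_eq1 : S @ \oo --> (1 : R).
  apply: cvg_near_cst; exists 1%N => // N /= N_gt0.
  by rewrite /S /gamma_ratio -mulr_suml -natr_sum gamma_sum // mulfV // pnatr_eq0 -lt0n.
exact: cvg_unique _ S_cvg S_eq1.
Qed.

Variable K : nat.
Hypotheses (qK_gt_q : (q < q ^ K)%N) (qK1 : (q%:R : 'Z_d) ^+ K = 1).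
Hypotheses (wqK0 : (wq q (q ^ K))%:R = 0 :> 'Z_d) (sumwqK0 : (sumwq q (q ^ K))%:R = 0 :> 'Z_d).

Lemma density_average w y : density w y = (q ^ K)%:R^-1 *
  \sum_(B < q ^ K) density (w + t * B%:R) (y + t * (uq q B)%:R + w * (wq q B)%:R).
Proof.
have qK_gt0 : (0 < q ^ K)%N by rewrite expn_gt0 ltnW // ltnW.
have cast_Zp (x : 'Z_d) : ((x : nat)%:Z)%:~R = x by rewrite -pmulrn natr_Zp.
set tw : int := (w : nat)%:Z; set ty : int := (y : nat)%:Z.
pose avg L := (q ^ K)%:R^-1 * \sum_(B < q ^ K)
  gamma_ratio R q d tu (tw + tu * B%:Z) 0 0 (ty + tu * (uq q B)%:Z + tw * (wq q B)%:Z) L.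
have avg_cvg_density : avg @ \oo --> density w y.
  have -> : avg = gamma_ratio R q d tu tw 0 0 ty \o muln (q ^ K).
    apply/funext => L; rewrite /avg /= /gamma_ratio gamma_block //.
    by rewrite natr_sum natrM invfM -mulr_suml; ring.
  exact: cvg_comp _ _ (cvg_mulnl _ qK_gt0) (gamma_ratio_cvg (tw := tw) (y := ty)).
have avg_cvg_mean : avg @ \oo --> (q ^ K)%:R^-1 *
    \sum_(B < q ^ K) density (w + t * B%:R) (y + t * (uq q B)%:R + w * (wq q B)%:R).
  apply: cvgMl_tmp; apply: cvg_big => [|B _]; first exact: add_continuous.
  have := density_cvg (tw := tw + tu * B%:Z) (y := ty + tu * (uq q B)%:Z + tw * (wq q B)%:Z).
  by rewrite !intrD !intrM !cast_Zp -!pmulrn.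
exact: cvg_unique _ avg_cvg_density avg_cvg_mean.
Qed.

Section Maximum.
Variable M : R.
Hypothesis density_le_M : forall w y, density w y <= M.

Lemma density_eqM_spread w y : density w y = M -> forall B, (B < q ^ K)%N ->
  density (w + t * B%:R) (y + t * (uq q B)%:R + w * (wq q B)%:R) = M.
Proof.
move=> wy_M B lt_BqK; have qK_gt0 : (0 < q ^ K)%N by rewrite expn_gt0 ltnW // ltnW.
pose f (B' : 'I_(q ^ K)) :=
  density (w + t * B'%:R) (y + t * (uq q B')%:R + w * (wq q B')%:R).
have f_M : forall B', f B' = M.
  apply: mean_eq_max => // [B'|]; first exact: density_le_M.
  by rewrite -density_average.
exact: f_M (Ordinal lt_BqK).
Qed.

Lemma density_eqM_shift w y : density w y = M -> density (w + t) y = M.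
Proof.
move=> wy_M; have := density_eqM_spread wy_M (ltn_trans q_gt1 qK_gt_q).
by rewrite uq1 // wq_small // !mulr0 !addr0 mulr1.
Qed.

Lemma density_eqM_row w y : density w y = M -> forall w', density w' y = M.
Proof.
move=> wy_M w'; have t_unit : t \is a GRing.unit by exact: intr_Zp_unit.
have shift_k k : density (w + t *+ k) y = M.
  elim: k => [|k IHk]; first by rewrite mulr0n addr0.
  by rewrite mulrS addrCA addrC density_eqM_shift.
have -> : w' = w + t *+ nat_of_ord (t^-1 * (w' - w)).
  by rewrite -mulr_natr natr_Zp mulVKr // addrC subrK.
exact: shift_k.
Qed.

Lemma density_eqM_all w y : density w y = M -> forall w' y', density w' y' = M.
Proof.
move=> wy_M w' y'.
have := density_eqM_spread (density_eqM_row wy_M (y' - y - t)) qK_gt_q.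
rewrite uq_q // wq_q // !mulr1 (_ : y + t + (y' - y - t) = y'); last by ring.
by move/density_eqM_row.
Qed.
End Maximum.

Lemma density_const w y : density w y = d%:R^-1.
Proof.
have [[w0 y0] _ max0] := @arg_maxP _ R _ (0, 0) xpredT
  (fun p : 'Z_d * 'Z_d => density p.1 p.2) isT.
have le_max w' y' : density w' y' <= density w0 y0 := max0 (w', y') isT.
have all_max := density_eqM_all le_max (erefl (density w0 y0)).
have d_neq0 : d%:R != 0 :> R by rewrite pnatr_eq0 -lt0n ltnW.
have := density_sum w; under eq_bigr do rewrite all_max.
rewrite sumr_const card_ord [X in _ *+ X]Zp_cast // => sum1.
by rewrite all_max -[LHS](mulfK d_neq0) mulr_natr sum1 div1r.
Qed.

End Density.

Theorem theorem4p4 (R : realType) (q d : nat) :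
  (2 <= q)%N -> (2 <= d)%N -> coprime q d ->
  (forall tu tw t2 t1 t0 : int,
      cvg (gamma_ratio R q d tu tw t2 t1 t0 @ \oo)) ->
  forall (tu tw x : int), coprimez tu d%:Z ->
    gamma_ratio R q d tu tw 0 0 x @ \oo --> ((d%:R)^-1 : R).
Proof.
move=> q_gt1 d_gt1 co_qd gamma_ratio_cvg tu tw x co_tu.
have [K [qK_gt_q qK1 wqK0 sumwqK0]] := exists_period d_gt1 q_gt1 co_qd.
rewrite -(density_const q_gt1 d_gt1 co_tu (fun tw y => gamma_ratio_cvg tu tw 0 0 y)
  qK_gt_q qK1 wqK0 sumwqK0 tw%:~R x%:~R).
exact: density_cvg.
Qed.
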